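(* Let $(X,f)$ be a dynamical system and $\mathbf{a}=(a_1,\dots,a_r)\in\mathbb{N}^r_*$. The following are equivalent: (1) $(X,f)$ is multi-minimal with respect to $\mathbf{a}$, i.e. $(X^r,f^{a_1}\times\dots\times f^{a_r})$ is minimal; (2) $(X,f)$ is $\mathcal{F}_s[\mathbf{a}]$-point transitive; (3) $Trans_{\mathcal{F}_s[\mathbf{a}]}(X,f)=X$. Consequently (taking all $\mathbf{a}=(1,2,\dots,i)$), the following are also equivalent: (1') $(X,f)$ is multi-minimal; (2') $(X,f)$ is $\mathcal{F}_s[\infty]$-point transitive; (3') $Trans_{\mathcal{F}_s[\infty]}(X,f)=X$.
   Context: A dynamical system is a pair $(X,f)$ with $X$ a compact metric space and $f:X\to X$ continuous. $\mathbb{N}=\{1,2,\dots\}$, $\mathbb{Z}_+=\{0,1,2,\dots\}$, $\mathbb{N}^r_*=\{(n_1,\dots,n_r)\in\mathbb{N}^r: n_1<\dots<n_r\}$. A system is minimal if it has no proper non-empty closed invariant subset; $(X,f)$ is multi-minimal if $(X^n,f\times f^2\times\dots\times f^n)$ is minimal for every $n\in\mathbb{N}$. $N(x,U)=\{n\in\mathbb{N}: f^n(x)\in U\}$. For a family $\mathcal{F}$ of subsets of $\mathbb{N}$, $x$ is an $\mathcal{F}$-transitive point if $N(x,U)\in\mathcal{F}$ for every non-empty open $U\subset X$; $Trans_{\mathcal{F}}(X,f)$ is the set of such points, and $(X,f)$ is $\mathcal{F}$-point transitive if it is non-empty. A set $F\subset\mathbb{N}$ is syndetic if there is $N$ with $\{n,\dots,n+N\}\cap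 F\ne\emptyset$ for all $n\in\mathbb{N}$. For $\mathbf{a}\in\mathbb{N}^r$, $\mathcal{F}_s[\mathbf{a}]$ is the collection of $F\subset\mathbb{N}$ such that for every $n_1,\dots,n_r\in\mathbb{Z}_+$ there is a syndetic set $F'\subset\mathbb{N}$ with $a_iF'+n_i=\{a_im+n_i:m\in F'\}\subset F$ for all $i=1,\dots,r$. $\mathcal{F}_s[\infty]=\bigcap_{i=1}^\infty\mathcal{F}_s[(1,2,\dots,i)]$. *)

From Stdlib Require Import Reals List.
Open Scope R_scope.

Section Dyn.
Variable M : Metric_Space.
Local Notation X := (Base M).
Local Notation d := (dist M).

Definition is_open (U : X -> Prop) : Prop :=
  forall x, U x -> exists eps, eps > 0 /\ forall y, d x y < eps -> U y.

Definition compact_space : Prop :=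
  forall (I : Type) (U : I -> X -> Prop),
    (forall i, is_open (U i)) -> (forall x, exists i, U i x) ->
    exists l : list I, forall x, exists i, In i l /\ U i x.

Definition continuous_map (f : X -> X) : Prop :=
  forall x eps, eps > 0 -> exists delta, delta > 0 /\
    forall y, d x y < delta -> d (f x) (f y) < eps.

Definition hitting_set (f : X -> X) (x : X) (U : X -> Prop) : nat -> Prop :=
  fun n => (1 <= n)%nat /\ U (Nat.iter n f x).

Definition F_transitive_point (F : (nat -> Prop) -> Prop) (f : X -> X) (x : X) : Prop :=
  forall U, is_open U -> (exists y, U y) -> F (hitting_set f x U).

Definition F_point_transitive (F : (nat -> Prop) -> Prop) (f : X -> X) : Prop :=
  exists x, F_transitive_point F f x.

Definition Trans_is_whole (F : (nat -> Prop) -> Prop) (f : X -> X) : Prop :=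
  forall x, F_transitive_point F f x.

(* The product X^r, indexed by {0,...,r-1} *)
Definition idx (r : nat) := {i : nat | (i < r)%nat}.

Definition prod_open (r : nat) (W : (idx r -> X) -> Prop) : Prop :=
  forall x, W x -> exists eps, eps > 0 /\
    forall y, (forall i, d (x i) (y i) < eps) -> W y.

Definition prod_map (f : X -> X) (r : nat) (a : nat -> nat) : (idx r -> X) -> (idx r -> X) :=
  fun x i => Nat.iter (a (proj1_sig i)) f (x i).

Definition multi_minimal_wrt (f : X -> X) (r : nat) (a : nat -> nat) : Prop :=
  forall A : (idx r -> X) -> Prop,
    prod_open r (fun x => ~ A x) ->
    (forall x, A x -> A (prod_map f r a x)) ->
    (exists x, A x) ->
    forall x, A x.

Definition multi_minimal (f : X -> X) : Prop :=
  forall n, (1 <= n)%nat -> multi_minimal_wrt f n (fun i => S i).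

End Dyn.

Definition syndetic (F : nat -> Prop) : Prop :=
  (forall m, F m -> (1 <= m)%nat) /\
  exists N, forall n, (1 <= n)%nat -> exists k, (n <= k <= n + N)%nat /\ F k.

(* a = (a_1,...,a_r) in N^r_* : coordinates a 0, ..., a (r-1) *)
Definition strictly_incr_pos (r : nat) (a : nat -> nat) : Prop :=
  (1 <= r)%nat /\ (1 <= a 0%nat)%nat /\
  forall i, (S i < r)%nat -> (a i < a (S i))%nat.

Definition Fs (r : nat) (a : nat -> nat) (F : nat -> Prop) : Prop :=
  forall n : nat -> nat, exists F' : nat -> Prop, syndetic F' /\
    forall i m, (i < r)%nat -> F' m -> F (a i * m + n i)%nat.

Definition Fs_inf (F : nat -> Prop) : Prop :=
  forall i, (1 <= i)%nat -> Fs i (fun j => S j) F.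

(* It then develops two dynamical facts about T:
   - in a minimal system the visiting times of any point to any non-empty
     open set are syndetic (a non-syndetic visiting set has arbitrarily long
     gaps, and a limit point of the gap starts has an orbit avoiding a ball,
     which yields a proper closed invariant set);
   - a uniformly recurrent point lies in every closed invariant set meeting
     its orbit closure.
   (1) => (3): a visit of T^m (f^{n_1} x, ..., f^{n_r} x) to U^r means
   a_i m + n_i in N(x,U), so minimality gives F_s[a]-transitivity of x.
   (2) => (1): if x is F_s[a]-transitive, every tuple (f^{n_i} x)_i is
   uniformly recurrent and approaches the diagonal point (x,...,x), so all
   of them, hence (by density) all of X^r, lie in the orbit closure of the
   diagonal point, which itself lies in every non-empty closed invariant
   set.
   (3) => (2) is trivial, and the F_s[infinity] statement follows by
   applying the equivalences to a = (1,...,i) for every i. *)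
From Stdlib Require Import Reals List.
From Stdlib Require Import Lra Lia Arith Classical ClassicalEpsilon ProofIrrelevance.
Open Scope R_scope.

Lemma common_radius_nat (P : nat -> R -> Prop) (m : nat) :
  (forall j δ δ', 0 < δ' <= δ -> P j δ -> P j δ') ->
  (forall j, (j < m)%nat -> exists δ, δ > 0 /\ P j δ) ->
  exists δ, δ > 0 /\ forall j, (j < m)%nat -> P j δ.
Proof.
  intros Hmon. induction m as [|m IH]; intros H.
  - exists 1; split; [lra | intros; lia].
  - destruct IH as [δ [Hδ Hj]]; [intros; apply H; lia|].
    destruct (H m ltac:(lia)) as [δ' [Hδ' HP]].
    assert (Hmin : 0 < Rmin δ δ') by (apply Rmin_pos; lra).
    exists (Rmin δ δ'). split; [exact Hmin|].
    intros j Hjm. destruct (Nat.eq_dec j m) as [->|Hne].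
    + apply Hmon with δ'; [split; [exact Hmin | apply Rmin_r] | exact HP].
    + apply Hmon with δ; [split; [exact Hmin | apply Rmin_l] | apply Hj; lia].
Qed.

Lemma common_radius (r : nat) (P : idx r -> R -> Prop) :
  (forall i δ δ', 0 < δ' <= δ -> P i δ -> P i δ') ->
  (forall i, exists δ, δ > 0 /\ P i δ) ->
  exists δ, δ > 0 /\ forall i, P i δ.
Proof.
  intros Hmon H.
  destruct (common_radius_nat (fun j δ => forall Hj : (j < r)%nat, P (exist _ j Hj) δ) r)
    as [δ [Hδ Hall]].
  - intros j δ δ' Hd HP Hj. apply Hmon with δ; auto.
  - intros j Hj. destruct (H (exist _ j Hj)) as [δ [Hδ HP]]. exists δ. split; [exact Hδ|].
    intros Hj'. rewrite (proof_irrelevance _ Hj' Hj). exact HP.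
  - exists δ. split; [exact Hδ|]. intros [j Hj]. apply Hall; exact Hj.
Qed.

Lemma idx_extend (r : nat) {B : Type} (b : B) (g : idx r -> B) :
  exists n : nat -> B, forall i, n (proj1_sig i) = g i.
Proof.
  exists (fun j => match lt_dec j r with left H => g (exist _ j H) | right _ => b end).
  intros [j Hj]. simpl. destruct (lt_dec j r) as [H|H]; [|contradiction].
  do 2 f_equal. apply proof_irrelevance.
Qed.

Section Metric.
Variable M : Metric_Space.
Local Notation X := (Base M).
Local Notation d := (dist M).

Lemma dist_self (x : X) : d x x = 0.
Proof. apply (proj2 (dist_refl M x x)); reflexivity. Qed.

Lemma dist_triangle (x y z : X) : d x z <= d x y + d y z.
Proof. apply (dist_tri M x z y). Qed.

Lemma ball_is_open (c : X) (e : R) : is_open M (fun y => d c y < e).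
Proof.
  intros y Hy. exists (e - d c y). split; [lra|].
  intros z Hz. pose proof (dist_triangle c y z). lra.
Qed.

Lemma iter_continuous (f : X -> X) : continuous_map M f -> forall n x eps, eps > 0 ->
  exists delta, delta > 0 /\
    forall y, d x y < delta -> d (Nat.iter n f x) (Nat.iter n f y) < eps.
Proof.
  intros Hcont n. induction n as [|n IHn]; intros x eps He.
  - exists eps; simpl; auto.
  - destruct (Hcont (Nat.iter n f x) eps He) as [d1 [Hd1 H1]].
    destruct (IHn x d1 Hd1) as [d2 [Hd2 H2]]. exists d2; split; [exact Hd2|].
    intros y Hy. simpl. apply H1, H2, Hy.
Qed.

Definition prod_close (r : nat) (e : R) (u v : idx r -> X) : Prop :=
  forall i, d (u i) (v i) < e.

Lemma prod_close_sym r e u v : prod_close r e u v -> prod_close r e v u.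
Proof. intros H i. rewrite dist_sym. apply H. Qed.

Lemma prod_close_triangle r e1 e2 u v w :
  prod_close r e1 u v -> prod_close r e2 v w -> prod_close r (e1 + e2) u w.
Proof.
  intros H1 H2 i. pose proof (dist_triangle (u i) (v i) (w i)).
  specialize (H1 i). specialize (H2 i). lra.
Qed.

Lemma prod_close_half r e u v w :
  prod_close r (e / 2) u v -> prod_close r (e / 2) v w -> prod_close r e u w.
Proof.
  intros H1 H2. replace e with (e / 2 + e / 2) by lra. eapply prod_close_triangle; eauto.
Qed.

Lemma prod_close_open r c e : prod_open M r (fun w => prod_close r e c w).
Proof.
  intros w Hw.
  destruct (common_radius r (fun i δ => δ <= e - d (c i) (w i))) as [δ [Hδ H]].
  - intros i δ δ' Hd HP. lra.
  - intros i. exists (e - d (c i) (w i)). specialize (Hw i). split; lra.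
  - exists δ. split; [exact Hδ|]. intros y Hy i.
    pose proof (dist_triangle (c i) (w i) (y i)). specialize (H i). specialize (Hy i). lra.
Qed.

Section ProductMap.
Variable f : X -> X.
Hypothesis Hcont : continuous_map M f.
Variables (r : nat) (a : nat -> nat).
Local Notation T := (prod_map M f r a).

Lemma prod_map_iter k v i : Nat.iter k T v i = Nat.iter (a (proj1_sig i) * k) f (v i).
Proof.
  induction k as [|k IH]; [rewrite Nat.mul_0_r; reflexivity|].
  rewrite Nat.iter_succ. unfold prod_map at 1. rewrite IH, <- Nat.iter_add. f_equal. lia.
Qed.

Lemma prod_map_iter_continuous k v ε : ε > 0 -> exists δ, δ > 0 /\
  forall w, prod_close r δ v w -> prod_close r ε (Nat.iter k T v) (Nat.iter k T w).
Proof.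
  intros Hε.
  destruct (common_radius r (fun i δ => forall y, d (v i) y < δ ->
      d (Nat.iter (a (proj1_sig i) * k) f (v i)) (Nat.iter (a (proj1_sig i) * k) f y) < ε))
    as [δ [Hδ H]].
  - intros i δ δ' Hd HP y Hy. apply HP. lra.
  - intros i. apply iter_continuous; assumption.
  - exists δ. split; [exact Hδ|]. intros w Hw i. rewrite !prod_map_iter. apply H, Hw.
Qed.

Lemma prod_map_iters_continuous N v ε : ε > 0 -> exists δ, δ > 0 /\
  forall k w, (k <= N)%nat -> prod_close r δ v w ->
    prod_close r ε (Nat.iter k T v) (Nat.iter k T w).
Proof.
  intros Hε.
  destruct (common_radius_nat (fun k δ => forall w, prod_close r δ v w ->
      prod_close r ε (Nat.iter k T v) (Nat.iter k T w)) (S N)) as [δ [Hδ H]].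
  - intros k δ δ' Hd HP w Hw. apply HP. intro i. specialize (Hw i). lra.
  - intros k _. apply prod_map_iter_continuous, Hε.
  - exists δ. split; [exact Hδ|]. intros k w Hk. apply H. lia.
Qed.

Lemma invariant_iter (A : (idx r -> X) -> Prop) :
  (forall x, A x -> A (T x)) -> forall k x, A x -> A (Nat.iter k T x).
Proof. intros H k. induction k; intros x Hx; simpl; auto. Qed.

End ProductMap.
End Metric.

Section Compactness.
Variable M : Metric_Space.
Local Notation X := (Base M).
Local Notation d := (dist M).
Hypothesis Hcomp : compact_space M.

(* Every sequence in a compact space has a cluster point: otherwise the balls
   eventually avoided by the sequence would form a cover with no finite
   subcover. *)
Lemma cluster_point (s : nat -> X) :
  exists x0, forall η, η > 0 -> forall N, exists k, (N <= k)%nat /\ d x0 (s k) < η.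
Proof.
  apply NNPP; intro H.
  set (I := {p : X * R * nat | snd (fst p) > 0 /\
              forall k, (snd p <= k)%nat -> ~ d (fst (fst p)) (s k) < snd (fst p)}).
  set (U := fun (p : I) y => d (fst (fst (proj1_sig p))) y < snd (fst (proj1_sig p))).
  destruct (Hcomp I U) as [l Hl].
  - intro p. apply ball_is_open.
  - intro y.
    assert (Hy : exists η N, η > 0 /\ forall k, (N <= k)%nat -> ~ d y (s k) < η).
    { apply NNPP; intro H'. apply H. exists y. intros η Hη N. apply NNPP; intro H2.
      apply H'. exists η, N. split; [exact Hη|]. intros k Hk Hd. apply H2. exists k; auto. }
    destruct Hy as [η [N [Hη HN]]].
    exists (exist _ (y, η, N) (conj Hη HN) : I). unfold U; simpl. rewrite dist_self; lra.
  - assert (Hbound : exists Nm, forall p, In p l -> (snd (proj1_sig p) <= Nm)%nat).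
    { clear Hl. induction l as [|p l IH].
      - exists 0%nat; intros _ [].
      - destruct IH as [Nm HNm]. exists (max Nm (snd (proj1_sig p))).
        intros q [<-|Hq]; [lia|]. specialize (HNm q Hq). lia. }
    destruct Hbound as [Nm HNm]. destruct (Hl (s Nm)) as [p [Hp Hu]].
    destruct (proj2_sig p) as [_ Hfar]. exact (Hfar Nm (HNm p Hp) Hu).
Qed.

Definition strictly_increasing (φ : nat -> nat) : Prop := forall k, (φ k < φ (S k))%nat.

Lemma strictly_increasing_ge φ : strictly_increasing φ -> forall k, (k <= φ k)%nat.
Proof. intros H k. induction k; [lia|]. specialize (H k). lia. Qed.

Lemma strictly_increasing_compose φ ψ :
  strictly_increasing φ -> strictly_increasing ψ -> strictly_increasing (fun k => φ (ψ k)).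
Proof.
  intros Hφ Hψ k. specialize (Hψ k). induction (ψ (S k)) as [|q IH]; [lia|].
  destruct (Nat.eq_dec (ψ k) q) as [->|Hne]; [apply Hφ|].
  specialize (IH ltac:(lia)). specialize (Hφ q). lia.
Qed.

(* Diagonal extraction: the j-th chosen index is beyond the previous one and
   within 1/(j+1) of the cluster point. *)
Fixpoint diagonal_index (g : nat -> nat -> nat) (j : nat) : nat :=
  match j with
  | 0 => g 0%nat 0%nat
  | S j' => g (S j') (S (diagonal_index g j'))
  end.

Lemma convergent_subsequence (s : nat -> X) : exists ψ x0, strictly_increasing ψ /\
  forall η, η > 0 -> exists K0, forall K, (K0 <= K)%nat -> d x0 (s (ψ K)) < η.
Proof.
  destruct (cluster_point s) as [x0 Hx].
  assert (Hg : forall j N, exists k, (N <= k)%nat /\ d x0 (s k) < / INR (S j)).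
  { intros. apply Hx. apply Rinv_0_lt_compat, lt_0_INR; lia. }
  set (g := fun j N => proj1_sig (constructive_indefinite_description _ (Hg j N))).
  assert (Hgp : forall j N, (N <= g j N)%nat /\ d x0 (s (g j N)) < / INR (S j))
    by (intros; exact (proj2_sig (constructive_indefinite_description _ (Hg j N)))).
  exists (diagonal_index g), x0. split.
  - intro k. simpl. pose proof (proj1 (Hgp (S k) (S (diagonal_index g k)))). lia.
  - intros η Hη. destruct (archimed_cor1 η Hη) as [N [HN HN0]]. exists N. intros K HK.
    assert (H : d x0 (s (diagonal_index g K)) < / INR (S K)) by (destruct K; apply Hgp).
    eapply Rlt_le_trans; [exact H|]. apply Rle_trans with (/ INR N); [|lra].
    apply Rinv_le_contravar; [apply lt_0_INR; lia | apply le_INR; lia].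
Qed.

(* Sequential compactness of X^r, by extracting one coordinate at a time. *)
Lemma prod_convergent_subsequence r (u : nat -> idx r -> X) :
  exists φ v, strictly_increasing φ /\
  forall η, η > 0 -> exists K0, forall K, (K0 <= K)%nat -> prod_close M r η v (u (φ K)).
Proof.
  assert (Hfirst : forall m, exists φ v, strictly_increasing φ /\
     forall η, η > 0 -> exists K0, forall K, (K0 <= K)%nat -> forall i : idx r,
       (proj1_sig i < m)%nat -> d (v i) (u (φ K) i) < η).
  { induction m as [|m [φ [v [Hφ Hc]]]].
    - exists (fun k => k), (u 0%nat). split; [intro; lia|].
      intros η Hη. exists 0%nat. intros K _ i Hi. lia.
    - destruct (lt_dec m r) as [Hm|Hm].
      + destruct (convergent_subsequence (fun K => u (φ K) (exist _ m Hm)))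
          as [ψ [x0 [Hψ Hc0]]].
        exists (fun k => φ (ψ k)), (fun i => if Nat.eq_dec (proj1_sig i) m then x0 else v i).
        split; [apply strictly_increasing_compose; assumption|].
        intros η Hη. destruct (Hc η Hη) as [K1 HK1]. destruct (Hc0 η Hη) as [K2 HK2].
        exists (max K1 K2). intros K HK i Hi.
        destruct (Nat.eq_dec (proj1_sig i) m) as [He|Hne].
        * destruct i as [j Hj]. simpl in He. subst j.
          rewrite (proof_irrelevance _ Hj Hm). apply HK2. lia.
        * apply HK1; [pose proof (strictly_increasing_ge ψ Hψ K); lia | lia].
      + exists φ, v. split; [exact Hφ|]. intros η Hη. destruct (Hc η Hη) as [K0 HK0].
        exists K0. intros K HK i Hi. apply HK0; [exact HK|]. destruct i; simpl in *; lia. }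
  destruct (Hfirst r) as [φ [v [Hφ Hc]]]. exists φ, v. split; [exact Hφ|].
  intros η Hη. destruct (Hc η Hη) as [K0 HK0]. exists K0. intros K HK i.
  apply HK0; [exact HK | exact (proj2_sig i)].
Qed.

End Compactness.

Lemma syndetic_elem (F : nat -> Prop) : syndetic F -> exists m, (1 <= m)%nat /\ F m.
Proof.
  intros [Hpos [N HN]]. destruct (HN 1%nat (le_n 1)) as [k [_ Hk]].
  exists k. split; [apply Hpos|]; exact Hk.
Qed.

Lemma not_syndetic_gaps (F : nat -> Prop) :
  (forall m, F m -> (1 <= m)%nat) -> ~ syndetic F ->
  forall N, exists p, (1 <= p)%nat /\ forall k, (p <= k <= p + N)%nat -> ~ F k.
Proof.
  intros Hpos Hns N. apply NNPP; intro Hno. apply Hns. split; [exact Hpos|].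
  exists N. intros p Hp. apply NNPP; intro Hgap.
  apply Hno. exists p. split; [exact Hp|]. intros k Hk HF. apply Hgap. exists k; auto.
Qed.

Section Dynamics.
Variable M : Metric_Space.
Local Notation X := (Base M).
Variable f : X -> X.
Hypothesis Hcont : continuous_map M f.
Variables (r : nat) (a : nat -> nat).
Local Notation T := (prod_map M f r a).
Local Notation close := (prod_close M r).

Definition is_closed (A : (idx r -> X) -> Prop) : Prop := prod_open M r (fun x => ~ A x).

Lemma is_closed_limit A w : is_closed A ->
  (forall δ, δ > 0 -> exists p, A p /\ close δ p w) -> A w.
Proof.
  intros Hcl Happ. apply NNPP; intro Hw. destruct (Hcl w Hw) as [ε [Hε Hball]].
  destruct (Happ ε Hε) as [p [Hp Hclose]]. exact (Hball p (prod_close_sym M _ _ _ _ Hclose) Hp).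
Qed.

Definition orbit_closure (y w : idx r -> X) : Prop :=
  forall δ, δ > 0 -> exists m, (1 <= m)%nat /\ close δ (Nat.iter m T y) w.

Lemma orbit_closure_closed y : is_closed (orbit_closure y).
Proof.
  intros w Hw. destruct (not_all_ex_not _ _ Hw) as [δ Hδ].
  apply imply_to_and in Hδ. destruct Hδ as [Hδ Hno].
  exists (δ/2). split; [lra|]. intros w' Hw' Horb. apply Hno.
  destruct (Horb (δ/2)) as [m [Hm1 Hm]]; [lra|]. exists m. split; [exact Hm1|].
  exact (prod_close_half M _ _ _ _ _ Hm (prod_close_sym M _ _ _ _ Hw')).
Qed.

Lemma orbit_closure_invariant y w : orbit_closure y w -> orbit_closure y (T w).
Proof.
  intros Hw δ Hδ. destruct (prod_map_iter_continuous M f Hcont r a 1 w δ Hδ) as [η [Hη Hc]].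
  destruct (Hw η Hη) as [m [Hm1 Hm]]. exists (S m). split; [lia|].
  apply prod_close_sym, (Hc _ (prod_close_sym M _ _ _ _ Hm)).
Qed.

Lemma orbit_closure_in_closed_invariant (A : (idx r -> X) -> Prop) y w :
  is_closed A -> (forall x, A x -> A (T x)) -> A y -> orbit_closure y w -> A w.
Proof.
  intros Hcl Hinv Hy Hw. apply (is_closed_limit A w Hcl). intros δ Hδ.
  destruct (Hw δ Hδ) as [m [_ Hm]]. exists (Nat.iter m T y).
  split; [apply invariant_iter; assumption | exact Hm].
Qed.

Definition uniformly_recurrent (y : idx r -> X) : Prop :=
  forall ε, ε > 0 -> exists F', syndetic F' /\
    forall m, F' m -> close ε (Nat.iter m T y) y.

Lemma uniformly_recurrent_self y : uniformly_recurrent y -> orbit_closure y y.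
Proof.
  intros Hur δ Hδ. destruct (Hur δ Hδ) as [F' [HF' Hret]].
  destruct (syndetic_elem F' HF') as [m [Hm1 Hm]]. exists m. split; [exact Hm1 | apply Hret, Hm].
Qed.

(* A uniformly recurrent point y lies in every closed invariant set meeting
   its orbit closure: if T^m y is near z in A, then T^k z is near T^(m+k) y,
   hence near y, for the boundedly many k needed to bring m+k into a
   return-time set of y. *)
Lemma uniformly_recurrent_in_closed_invariant (A : (idx r -> X) -> Prop) y z :
  is_closed A -> (forall x, A x -> A (T x)) -> A z ->
  uniformly_recurrent y -> orbit_closure y z -> A y.
Proof.
  intros Hcl Hinv Hz Hur Hyz. apply (is_closed_limit A y Hcl). intros ε Hε.
  destruct (Hur (ε/2)) as [F' [[_ [N HN]] Hret]]; [lra|].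
  destruct (prod_map_iters_continuous M f Hcont r a N z (ε/2)) as [δ [Hδ Hunif]]; [lra|].
  destruct (Hyz δ Hδ) as [m [Hm1 Hm]].
  destruct (HN m Hm1) as [k [[Hk1 Hk2] Hk]].
  pose proof (Hunif (k - m)%nat _ ltac:(lia) (prod_close_sym M _ _ _ _ Hm)) as Hnear.
  rewrite <- Nat.iter_add, (Nat.sub_add m k Hk1) in Hnear.
  exists (Nat.iter (k - m) T z). split; [apply invariant_iter; assumption|].
  exact (prod_close_half M _ _ _ _ _ Hnear (Hret k Hk)).
Qed.

End Dynamics.

Section Minimality.
Variable M : Metric_Space.
Local Notation X := (Base M).
Variable f : X -> X.
Hypothesis Hcont : continuous_map M f.
Hypothesis Hcomp : compact_space M.
Variables (r : nat) (a : nat -> nat).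
Local Notation T := (prod_map M f r a).
Local Notation close := (prod_close M r).

Definition avoids (e : R) (c w : idx r -> X) : Prop :=
  forall k, ~ close e c (Nat.iter k T w).

Lemma avoids_closed e c : is_closed M r (avoids e c).
Proof.
  intros w Hw. destruct (not_all_ex_not _ _ Hw) as [k Hk]. apply NNPP in Hk.
  destruct (prod_close_open M r c e (Nat.iter k T w) Hk) as [η [Hη Hball]].
  destruct (prod_map_iter_continuous M f Hcont r a k w η Hη) as [δ [Hδ Hnear]].
  exists δ. split; [exact Hδ|]. intros w' Hw' Havoid. apply (Havoid k), Hball, Hnear. exact Hw'.
Qed.

Lemma avoids_invariant e c w : avoids e c w -> avoids e c (T w).
Proof. intros Hw k. rewrite <- Nat.iter_succ_r. apply Hw. Qed.

(* If the orbit of y has arbitrarily long stretches outside the e-ball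
   around c, a limit point of the starts of these stretches has its whole
   orbit outside the (e/2)-ball. *)
Lemma long_gaps_avoiding_point e c y : e > 0 ->
  (forall N, exists p, forall k, (p <= k <= p + N)%nat -> ~ close e c (Nat.iter k T y)) ->
  exists v, avoids (e / 2) c v.
Proof.
  intros He Hgaps.
  set (start := fun N => proj1_sig (constructive_indefinite_description _ (Hgaps N))).
  assert (Hstart : forall N k, (start N <= k <= start N + N)%nat ->
                   ~ close e c (Nat.iter k T y))
    by (intro N; exact (proj2_sig (constructive_indefinite_description _ (Hgaps N)))).
  destruct (prod_convergent_subsequence M Hcomp r (fun N => Nat.iter (start N) T y))
    as [φ [v [Hφ Hlim]]].
  exists v. intros k Hk.
  destruct (prod_map_iter_continuous M f Hcont r a k v (e/2)) as [δ [Hδ Hnear]]; [lra|].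
  destruct (Hlim δ Hδ) as [K0 HK0].
  pose proof (strictly_increasing_ge φ Hφ (max K0 k)) as HφK.
  apply (Hstart (φ (max K0 k)) (start (φ (max K0 k)) + k)%nat); [lia|].
  
  rewrite Nat.add_comm, Nat.iter_add.
  exact (prod_close_half M _ _ _ _ _ Hk (Hnear _ (HK0 (max K0 k) ltac:(lia)))).
Qed.

(* In a minimal system the visiting times of every point to every ball are
   syndetic: otherwise the set of points avoiding a smaller ball is a
   non-empty closed invariant set missing the centre. *)
Lemma minimal_syndetic_visits e c y : e > 0 ->
  multi_minimal_wrt M f r a ->
  syndetic (fun m => (1 <= m)%nat /\ close e c (Nat.iter m T y)).
Proof.
  intros He Hmin. apply NNPP; intro Hns.
  destruct (long_gaps_avoiding_point e c y He) as [v Hv].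
  { intro N. destruct (not_syndetic_gaps _ (fun m Hm => proj1 Hm) Hns N) as [p [Hp1 Hgap]].
    exists p. intros k Hk Hclose. apply (Hgap k Hk). split; [lia | exact Hclose]. }
  assert (Hc : avoids (e / 2) c c).
  { apply (Hmin (avoids (e / 2) c) (avoids_closed _ _) (avoids_invariant _ _)).
    exists v; exact Hv. }
  apply (Hc 0%nat). intro i. simpl. rewrite dist_self. lra.
Qed.

End Minimality.

Lemma strictly_incr_pos_ge1 r a : strictly_incr_pos r a -> forall i, (i < r)%nat -> (1 <= a i)%nat.
Proof.
  intros [_ [H0 H]] i. induction i as [|i IH]; intros Hi; [exact H0|].
  specialize (H i Hi). specialize (IH ltac:(lia)). lia.
Qed.

(* (1) => (3): in the minimal product system, the times m at which
   T^m (f^{n_1} x, ..., f^{n_r} x) lies in U^r form a syndetic set F' with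
   a_i F' + n_i contained in N(x,U). *)
Lemma minimal_all_transitive M f r a :
  continuous_map M f -> compact_space M -> strictly_incr_pos r a ->
  multi_minimal_wrt M f r a -> Trans_is_whole M (Fs r a) f.
Proof.
  intros Hcont Hcomp Hs Hmin x U HU [u0 Hu0] n.
  destruct (HU u0 Hu0) as [ε [Hε Hball]].
  set (y := fun i : idx r => Nat.iter (n (proj1_sig i)) f x).
  set (c := fun _ : idx r => u0).
  exists (fun m => (1 <= m)%nat /\ prod_close M r ε c (Nat.iter m (prod_map M f r a) y)).
  split; [exact (minimal_syndetic_visits M f Hcont Hcomp r a ε c y Hε Hmin)|].
  intros i m Hi [Hm1 Hm]. split; [pose proof (strictly_incr_pos_ge1 r a Hs i Hi); nia|].
  apply Hball. specialize (Hm (exist _ i Hi)).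
  rewrite prod_map_iter in Hm. unfold y, c in Hm; simpl in Hm.
  rewrite <- Nat.iter_add in Hm. exact Hm.
Qed.

Section TransitiveImpliesMinimal.
Variable M : Metric_Space.
Local Notation X := (Base M).
Local Notation d := (dist M).
Variable f : X -> X.
Hypothesis Hcont : continuous_map M f.
Variables (r : nat) (a : nat -> nat).
Hypothesis Hr : (0 < r)%nat.
Variable x : X.
Hypothesis Htr : F_transitive_point M (Fs r a) f x.
Local Notation T := (prod_map M f r a).
Local Notation close := (prod_close M r).

Definition orbit_tuple (n : nat -> nat) : idx r -> X := fun i => Nat.iter (n (proj1_sig i)) f x.
Local Notation diagonal := (orbit_tuple (fun _ => 0%nat)).

Lemma transitive_ball c δ : δ > 0 -> Fs r a (hitting_set M f x (fun z => d c z < δ)).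
Proof. intros Hδ. apply Htr; [apply ball_is_open | exists c; rewrite dist_self; lra]. Qed.

(* Returns of x to a small ball at the times a_i m, m in a syndetic set, are
   transported by f^{n_i}: every orbit tuple is uniformly recurrent. *)
Lemma orbit_tuple_uniformly_recurrent n : uniformly_recurrent M f r a (orbit_tuple n).
Proof.
  intros ε Hε.
  destruct (common_radius r (fun i δ => forall z, d x z < δ ->
     d (Nat.iter (n (proj1_sig i)) f x) (Nat.iter (n (proj1_sig i)) f z) < ε)) as [δ [Hδ H]].
  - intros i δ δ' Hd HP z Hz. apply HP. lra.
  - intros i. apply iter_continuous; assumption.
  - destruct (transitive_ball x δ Hδ (fun _ => 0%nat)) as [F' [HF' Hret]].
    exists F'. split; [exact HF'|]. intros m Hm i.
    rewrite prod_map_iter. unfold orbit_tuple. rewrite <- !Nat.iter_add, Nat.add_comm, Nat.iter_add.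
    destruct (Hret (proj1_sig i) m (proj2_sig i) Hm) as [_ Hin].
    rewrite Nat.add_0_r in Hin. rewrite dist_sym. apply H, Hin.
Qed.

(* Shifting by n in the definition of F_s[a] brings every orbit tuple near
   the diagonal point. *)
Lemma diagonal_in_orbit_closure n : orbit_closure M f r a (orbit_tuple n) diagonal.
Proof.
  intros δ Hδ.
  destruct (transitive_ball x δ Hδ n) as [F' [HF' Hm]].
  destruct (syndetic_elem F' HF') as [k [Hk1 Hk]].
  exists k. split; [exact Hk1|]. intro i.
  rewrite prod_map_iter. unfold orbit_tuple. simpl. rewrite <- Nat.iter_add.
  destruct (Hm (proj1_sig i) k (proj2_sig i) Hk) as [_ Hin].
  rewrite dist_sym. exact Hin.
Qed.

(* Since x is in particular transitive, orbit tuples are dense in X^r. *)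
Lemma orbit_tuple_dense w δ : δ > 0 -> exists n, close δ (orbit_tuple n) w.
Proof.
  intros Hδ.
  assert (H : forall i : idx r, exists p, d (w i) (Nat.iter p f x) < δ).
  { intros i. destruct (transitive_ball (w i) δ Hδ (fun _ => 0%nat)) as [F' [HF' Hm]].
    destruct (syndetic_elem F' HF') as [k [_ Hk]].
    destruct (Hm 0%nat k Hr Hk) as [_ Hin]. eauto. }
  set (g := fun i => proj1_sig (constructive_indefinite_description _ (H i))).
  assert (Hg : forall i, d (w i) (Nat.iter (g i) f x) < δ)
    by (intro i; exact (proj2_sig (constructive_indefinite_description _ (H i)))).
  destruct (idx_extend r 0%nat g) as [n Hn]. exists n. intro i. unfold orbit_tuple.
  rewrite Hn, dist_sym. apply Hg.
Qed.

Lemma diagonal_orbit_dense w : orbit_closure M f r a diagonal w.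
Proof.
  apply (is_closed_limit M r _ w (orbit_closure_closed M f r a diagonal)).
  intros δ Hδ. destruct (orbit_tuple_dense w δ Hδ) as [n Hn]. exists (orbit_tuple n).
  split; [|exact Hn].
  apply (uniformly_recurrent_in_closed_invariant M f Hcont r a _ _ diagonal
           (orbit_closure_closed M f r a diagonal) (orbit_closure_invariant M f Hcont r a diagonal)).
  - apply uniformly_recurrent_self, orbit_tuple_uniformly_recurrent.
  - apply orbit_tuple_uniformly_recurrent.
  - apply diagonal_in_orbit_closure.
Qed.

(* (2) => (1): a non-empty closed invariant set contains the (uniformly
   recurrent) diagonal point, whose orbit is dense. *)
Lemma transitive_minimal : multi_minimal_wrt M f r a.
Proof.
  intros A Hcl Hinv [z Hz] w.
  assert (Hdiag : A diagonal).
  { apply (uniformly_recurrent_in_closed_invariant M f Hcont r a A diagonal z Hcl Hinv Hz).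
    - apply orbit_tuple_uniformly_recurrent.
    - apply diagonal_orbit_dense. }
  exact (orbit_closure_in_closed_invariant M f r a A diagonal w Hcl Hinv Hdiag
           (diagonal_orbit_dense w)).
Qed.

End TransitiveImpliesMinimal.

Lemma cycle_equiv (A B C : Prop) :
  (A -> C) -> (C -> B) -> (B -> A) -> (A <-> B) /\ (B <-> C).
Proof. tauto. Qed.

Lemma whole_point_transitive M F f :
  inhabited (Base M) -> Trans_is_whole M F f -> F_point_transitive M F f.
Proof. intros [x0] Hall. exists x0. exact (Hall x0). Qed.

Lemma Fs_equivalences M f r a :
  compact_space M -> continuous_map M f -> inhabited (Base M) -> strictly_incr_pos r a ->
  (multi_minimal_wrt M f r a <-> F_point_transitive M (Fs r a) f) /\
  (F_point_transitive M (Fs r a) f <-> Trans_is_whole M (Fs r a) f).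
Proof.
  intros Hcomp Hcont Hinh Hs.
  assert (Hr : (0 < r)%nat) by (destruct Hs; lia).
  apply cycle_equiv.
  - exact (minimal_all_transitive M f r a Hcont Hcomp Hs).
  - exact (whole_point_transitive M _ f Hinh).
  - intros [x Hx]. exact (transitive_minimal M f Hcont r a Hr x Hx).
Qed.

Lemma Fs_inf_transitive_point M f x :
  F_transitive_point M Fs_inf f x <->
  forall i, (1 <= i)%nat -> F_transitive_point M (Fs i (fun j => S j)) f x.
Proof.
  split.
  - intros Hx i Hi U HU Hne. exact (Hx U HU Hne i Hi).
  - intros Hx U HU Hne i Hi. exact (Hx i Hi U HU Hne).
Qed.

Lemma one_to_i_strictly_incr_pos i : (1 <= i)%nat -> strictly_incr_pos i (fun j => S j).
Proof. intros Hi. split; [exact Hi | split; [lia | intros; lia]]. Qed.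

Theorem theorem6p4 (M : Metric_Space) (f : Base M -> Base M) :
  compact_space M -> continuous_map M f -> inhabited (Base M) ->
  (forall (r : nat) (a : nat -> nat), strictly_incr_pos r a ->
     (multi_minimal_wrt M f r a <-> F_point_transitive M (Fs r a) f) /\
     (F_point_transitive M (Fs r a) f <-> Trans_is_whole M (Fs r a) f)) /\
  ((multi_minimal M f <-> F_point_transitive M Fs_inf f) /\
   (F_point_transitive M Fs_inf f <-> Trans_is_whole M Fs_inf f)).
Proof.
  intros Hcomp Hcont Hinh.
  assert (Heq := fun r a => Fs_equivalences M f r a Hcomp Hcont Hinh).
  split; [exact Heq|]. apply cycle_equiv.
  - intros Hm x. apply Fs_inf_transitive_point. intros i Hi.
    destruct (Heq i _ (one_to_i_strictly_incr_pos i Hi)) as [[Hmin_pt _] [Hpt_all _]].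
    exact (Hpt_all (Hmin_pt (Hm i Hi)) x).
  - exact (whole_point_transitive M _ f Hinh).
  - intros [x Hx] i Hi. apply (Heq i _ (one_to_i_strictly_incr_pos i Hi)).
    exists x. exact (proj1 (Fs_inf_transitive_point M f x) Hx i Hi).
Qed.
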